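(* Domineering on the $2 \times 5$ torus and on the $2 \times 9$ torus are second-player wins, and Domineering on the $2 \times 13$ torus is a win for Hepzibah regardless of who moves first.
   Context: Domineering: Vera places vertical dominoes (covering two vertically adjacent empty cells), Hepzibah places horizontal dominoes (covering two horizontally adjacent empty cells); players alternate, and a player who cannot move on her turn loses. The $2 \times n$ torus is the array of $2$ rows and $n$ columns of cells with both pairs of opposite edges identified, so horizontal adjacency wraps around from column $n$ to column $1$ (and a vertical domino occupies both cells of a column). *)

From mathcomp Require Import all_boot.
Set Implicit Arguments. Unset Strict Implicit. Unset Printing Implicit Defensive.

Inductive player := Vera | Hepzibah.

Definition opp (p : player) : player :=
  match p with Vera => Hepzibah | Hepzibah => Vera end.

(* Cells of the 2 x n torus: (row, column), rows 'I_2, columns 'I_n.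
   A position is the set of occupied cells. *)
Definition cell (n : nat) := ('I_2 * 'I_n)%type.
Definition position (n : nat) := {set cell n}.

Definition row0 : 'I_2 := ord0.
Definition row1 : 'I_2 := ord_max.

Definition vdomino (n : nat) (j : 'I_n) : position n :=
  [set (row0, j); (row1, j)].

(* The two cells covered by a horizontal domino in row r starting at column j;
   horizontal adjacency wraps around: column j is adjacent to column j+1 mod n. *)
Definition hdomino (n : nat) (r : 'I_2) (j : 'I_n) : position n :=
  [set (r, j); (r, ordS j)].

Definition move (n : nat) (p : player) (b b' : position n) : Prop :=
  match p with
  | Vera => exists j : 'I_n,
      [disjoint vdomino j & b] /\ b' = vdomino j :|: b
  | Hepzibah => exists (r : 'I_2) (j : 'I_n), (1 < n)%N /\
      [disjoint hdomino r j & b] /\ b' = hdomino r j :|: b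
  end.

(* Lose n p b : the player p, about to move in position b, loses, i.e. every
   move of p leads to a position that the opponent wins (normal play: a player
   who cannot move loses, since then Lose holds vacuously). *)
Inductive Win (n : nat) : player -> position n -> Prop :=
| WinMove p b b' : move p b b' -> Lose (opp p) b' -> Win p b
with Lose (n : nat) : player -> position n -> Prop :=
| LoseAll p b : (forall b', move p b b' -> Win (opp p) b') -> Lose p b.

Definition empty_board (n : nat) : position n := set0.

Definition second_player_win (n : nat) : Prop :=
  Lose Vera (empty_board n) /\ Lose Hepzibah (empty_board n).

Definition hepzibah_wins (n : nat) : Prop :=
  Win Hepzibah (empty_board n) /\ Lose Vera (empty_board n).

(* The theorem is a finite computation: a complete game-tree search on the
   2 x n torus.  Boards are encoded as bitmasks in [N], cell (r, j) being bit
   r * n + j, so that a domino fits iff its mask has no bit in common with the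
   board, and placing it is a bitwise or.  A fuelled minimax search over these
   masks is proved sound for [Win] and [Lose], and evaluating it decides the
   three outcome classes. *)
From Stdlib Require Import NArith.
From mathcomp Require Import all_boot.

Set Implicit Arguments. Unset Strict Implicit. Unset Printing Implicit Defensive.

Section Solver.

Variables (S : eqType) (next : player -> S -> seq S).

Fixpoint exists_losing (eval : S -> option bool) (l : seq S) : option bool :=
  match l with
  | [::] => Some false
  | s :: l' =>
    match eval s with
    | Some false => Some true
    | Some true => exists_losing eval l'
    | None => None
    end
  end.

Fixpoint solve (fuel : nat) (p : player) (s : S) : option bool :=
  if fuel is fuel'.+1 then exists_losing (solve fuel' (opp p)) (next p s)
  else None.

Lemma exists_losing_true eval l :
  exists_losing eval l = Some true -> exists2 s, s \in l & eval s = Some false.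
Proof.
elim: l => //= s l IH; case Es: (eval s) => [[]|] //.
  by move/IH => [s' s'l Es']; exists s' => //; rewrite inE s'l orbT.
by move=> _; exists s; rewrite ?mem_head.
Qed.

Lemma exists_losing_false eval l :
  exists_losing eval l = Some false -> forall s, s \in l -> eval s = Some true.
Proof.
elim: l => //= s l IH; case Es: (eval s) => [[]|] // /IH {}IH s'.
by rewrite inE => /predU1P [->|/IH].
Qed.

Variables (n : nat) (enc : position n -> S).

Hypothesis nextP : forall p b s,
  s \in next p (enc b) <-> exists2 b', move p b b' & s = enc b'.

Lemma solve_sound fuel p b :
  (solve fuel p (enc b) = Some true -> Win p b) /\
  (solve fuel p (enc b) = Some false -> Lose p b).
Proof.
elim: fuel p b => [|fuel IH] p b //=; split.
- case/exists_losing_true => s /nextP [b' mv ->] /(proj2 (IH _ _)).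
  exact: WinMove mv.
- move/exists_losing_false => lost; constructor => b' mv.
  by apply: (proj1 (IH _ _)); apply: lost; apply/nextP; exists b'.
Qed.

End Solver.

Section TorusMasks.

Variable n : nat.

Definition bit (c : cell n) : nat := c.1 * n + c.2.

Lemma bit_inj : injective bit.
Proof.
move=> [r j] [r' j']; rewrite /bit /= => Ebit.
have Ej : j = j' :> nat.
  by have := congr1 (modn^~ n) Ebit; rewrite !modnMDl !modn_small.
have n_gt0 : 0 < n by case: (n) j {Ebit Ej}=> [[]|].
have : r * n == r' * n by rewrite -(eqn_add2r j') -[in r * n + _]Ej Ebit.
by rewrite eqn_pmul2r // => /eqP Er; congr (_, _); apply: val_inj.
Qed.

Definition mask (A : position n) : N :=
  foldr (fun c m => N.setbit m (N.of_nat (bit c))) 0%num (enum A).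

Lemma testbit_mask A i :
  N.testbit (mask A) i = has (fun c => N.of_nat (bit c) == i) (enum A).
Proof.
rewrite /mask; elim: (enum A) => [|c s IH] /=; first exact: N.bits_0.
by rewrite N.setbit_eqb IH orbC.
Qed.

Lemma mask0 : mask set0 = 0%num.
Proof. by rewrite /mask enum_set0. Qed.

Lemma mask1 c : mask [set c] = N.setbit 0 (N.of_nat (bit c)).
Proof. by rewrite /mask enum_set1. Qed.

Lemma maskU (A B : position n) : mask (A :|: B) = N.lor (mask A) (mask B).
Proof. by apply: N.bits_inj => i; rewrite N.lor_spec !testbit_mask has_setU. Qed.

Lemma disjoint_mask (A B : position n) :
  [disjoint A & B] = (N.land (mask A) (mask B) == 0%num).
Proof.
apply/idP/eqP => [AB|AB0].
  apply: N.bits_inj_0 => i; rewrite N.land_spec !testbit_mask.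
  apply/negbTE/andP => [[/hasP [c cA /eqP <-] /hasP [c' c'B /eqP]]].
  move/Nat2N.inj/bit_inj => Ec'; rewrite mem_enum in cA.
  by rewrite mem_enum Ec' (disjointFr AB cA) in c'B.
apply/pred0P => c /=; apply/negbTE/andP => [[cA cB]].
have has_c (X : position n) :
    c \in X -> has (fun c' => N.of_nat (bit c') == N.of_nat (bit c)) (enum X).
  by move=> cX; apply/hasP; exists c; rewrite ?mem_enum.
have := N.land_spec (mask A) (mask B) (N.of_nat (bit c)).
by rewrite AB0 N.bits_0 !testbit_mask (has_c A) ?(has_c B).
Qed.

Definition dominoes (p : player) : seq (cell n * cell n) :=
  match p with
  | Vera => [seq ((row0, j), (row1, j)) | j <- ord_enum n]
  | Hepzibah => if 1 < n then
      [seq ((r, j), (r, ordS j)) | r <- ord_enum 2, j <- ord_enum n] else [::]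
  end.

Lemma moveP p b b' :
  move p b b' <-> exists2 d, d \in dominoes p &
    [disjoint [set d.1; d.2] & b] /\ b' = [set d.1; d.2] :|: b.
Proof.
case: p; split => /=.
- move=> [j [dis ->]]; exists ((row0, j), (row1, j)) => //.
  by apply/mapP; exists j; rewrite ?mem_ord_enum.
- by move=> [_ /mapP [j _ ->] [dis ->]]; exists j.
- move=> [r [j [n_gt1 [dis ->]]]]; exists ((r, j), (r, ordS j)) => //.
  by rewrite n_gt1; apply/allpairsP; exists (r, j); rewrite !mem_ord_enum.
- move=> [d]; case: ifP => // n_gt1 /allpairsP [[r j] [_ _ ->]] [dis ->].
  by exists r, j.
Qed.

(* An arithmetic copy of [dominoes] for evaluation: [ord_enum] does not
   compute, since its [insub] tests go through the opaque [idP]. *)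
Definition domino_bits (p : player) : seq (nat * nat) :=
  match p with
  | Vera => [seq (j, n + j) | j <- iota 0 n]
  | Hepzibah => if 1 < n then
      [seq (r * n + j, r * n + j.+1 %% n) | r <- iota 0 2, j <- iota 0 n] else [::]
  end.

Lemma domino_bitsE p : domino_bits p = [seq (bit d.1, bit d.2) | d <- dominoes p].
Proof.
case: p; rewrite /domino_bits /dominoes.
  by rewrite -val_ord_enum -!map_comp; apply: eq_map => j; rewrite /bit /= mul1n.
case: ifP => // _.
by rewrite map_allpairs -(val_ord_enum 2) -(val_ord_enum n) allpairs_mapl allpairs_mapr.
Qed.

Definition domino_mask (d : nat * nat) : N :=
  N.lor (N.setbit 0 (N.of_nat d.1)) (N.setbit 0 (N.of_nat d.2)).

Lemma mask_set2 c c' : mask [set c; c'] = domino_mask (bit c, bit c').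
Proof. by rewrite maskU !mask1. Qed.

Definition mask_moves (ds : seq N) (m : N) : seq N :=
  [seq N.lor d m | d <- ds & N.land d m == 0%num].

(* The [let]s make the (call-by-value) evaluation build the domino masks once,
   not at every node of the search. *)
Definition torus_moves : player -> N -> seq N :=
  let V := map domino_mask (domino_bits Vera) in
  let H := map domino_mask (domino_bits Hepzibah) in
  fun p => mask_moves (if p is Vera then V else H).

Lemma torus_movesE p m :
  torus_moves p m = mask_moves [seq mask [set d.1; d.2] | d <- dominoes p] m.
Proof.
have -> : torus_moves p m = mask_moves (map domino_mask (domino_bits p)) m.
  by case: p.
rewrite domino_bitsE -map_comp; congr mask_moves.
by apply: eq_map => d; rewrite /= mask_set2.
Qed.

Lemma torus_movesP p b s :
  s \in torus_moves p (mask b) <-> exists2 b', move p b b' & s = mask b'.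
Proof.
rewrite torus_movesE /mask_moves filter_map -map_comp; split.
- case/mapP => -[c c']; rewrite mem_filter /= -disjoint_mask => /andP [dis dp] ->.
  exists ([set c; c'] :|: b); last by rewrite -maskU.
  by apply/moveP; exists (c, c').
- case=> _ /moveP [[c c'] dp [dis ->]] ->; apply/mapP; exists (c, c').
    by rewrite mem_filter /= -disjoint_mask dis.
  by rewrite /= -maskU.
Qed.

End TorusMasks.

(* Fuel [n.+1] suffices since each move fills two of the [2 * n] cells; too
   little fuel would only make the search answer [None]. *)
Definition torus_solve (n : nat) (p : player) : option bool :=
  solve (torus_moves n) n.+1 p 0%num.

Lemma torus_solve_sound n p :
  (torus_solve n p = Some true -> Win p (empty_board n)) /\
  (torus_solve n p = Some false -> Lose p (empty_board n)).
Proof. by rewrite /torus_solve -(mask0 n); apply: solve_sound; apply: torus_movesP. Qed.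

Lemma second_player_win_solve n :
  torus_solve n Vera = Some false -> torus_solve n Hepzibah = Some false ->
  second_player_win n.
Proof. by move=> /(proj2 (torus_solve_sound _ _)) ? /(proj2 (torus_solve_sound _ _)). Qed.

Lemma hepzibah_wins_solve n :
  torus_solve n Hepzibah = Some true -> torus_solve n Vera = Some false ->
  hepzibah_wins n.
Proof. by move=> /(proj1 (torus_solve_sound _ _)) ? /(proj2 (torus_solve_sound _ _)). Qed.

Theorem mainTheorem14 :
  second_player_win 5 /\ second_player_win 9 /\ hepzibah_wins 13.
Proof.
split; [|split].
- by apply: second_player_win_solve; vm_compute.
- by apply: second_player_win_solve; vm_compute.
- by apply: hepzibah_wins_solve; vm_compute.
Qed.
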